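(* Let $\mathcal{D}=(\mathcal{G}, X, Z, T, T', Y, Y')$ be random quantities on a probability space whose joint distribution (with densities, denoted generically by $p$) follows the causal structure of the Bayesian network with edges $X\to Z$, $\mathcal{G}\to Z$, $Z\to Y$, $T\to Y$, $Z\to Y'$, $T'\to Y'$, and optionally $X\to \mathcal{G}$, $X\to T$, $X\to T'$; that is, the joint density factorizes as $$p(\mathcal{G}, X, Z, T, T', Y, Y') = p(X)\,p(\mathcal{G}\mid X)\,p(T\mid X)\,p(T'\mid X)\,p(Z\mid \mathcal{G}, X)\,p(Y\mid Z, T)\,p(Y'\mid Z, T'),$$ where the factors $p(\mathcal{G}\mid X)$, $p(T\mid X)$, $p(T'\mid X)$ may or may not actually depend on $X$. Define $$J(\mathcal{D}) = \log p(Y'\mid Y, \mathcal{G}, X, T, T') + \log p(Y\mid \mathcal{G}, X, T).$$ Then $$J(\mathcal{D}) \ge \mathbb{E}_{p(Z\mid Y, \mathcal{G}, X, T)} \log p(Y\mid Z, T) + \log p(Y'\mid \mathcal{G}, X, T') - \mathrm{KL}\big[p(Z\mid Y, \mathcal{G}, X, T)\,\big\|\, p(Z\mid Y', \mathcal{G}, X, T')\big].$$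
   Context: $Y\in\mathbb{R}^n$ is an outcome vector (e.g. gene expressions), $X$ is a vector of covariates, $T$ is a treatment, $Z\in\mathbb{R}^d$ is an unobserved latent feature vector, $T'$ is a counterfactual treatment and $Y'$ the corresponding counterfactual outcome (unobserved). $\mathcal{G}=(\mathcal{V},\mathcal{E})$ is a graph with node feature matrix $\mathcal{V}\in\mathbb{R}^{n\times v}$ and adjacency matrix $\mathcal{E}\in\{0,1\}^{n\times n}$, treated as a (possibly deterministic) random variable. $\mathrm{KL}$ denotes Kullback–Leibler divergence, and all conditional densities appearing are assumed to exist and be positive. *)

From HB Require Import structures.
From mathcomp Require Import all_boot all_order all_algebra.
From mathcomp Require Import all_classical all_reals all_analysis.
Set Implicit Arguments. Unset Strict Implicit. Unset Printing Implicit Defensive.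
Import Order.TTheory GRing.Theory Num.Theory.
Local Open Scope ring_scope.
Local Open Scope ereal_scope.

(* The factor densities are
     pX x, pG x g = p(g|x), pT x t = p(t|x), pT' x t' = p(t'|x),
     pZ g x z = p(z|g,x), pY z t y = p(y|z,t), pY' z t' y' = p(y'|z,t').
   All other (marginal / conditional) densities are DERIVED from the joint density
   by marginalisation (nested integrals) and ratios. *)

Section Model.
Context {R : realType} {dG dX dZ dT dY : measure_display}
  {TG : measurableType dG} {TX : measurableType dX} {TZ : measurableType dZ}
  {TT : measurableType dT} {TY : measurableType dY}.
Variables (muG : {measure set TG -> \bar R}) (muX : {measure set TX -> \bar R})
  (muZ : {measure set TZ -> \bar R}) (muT : {measure set TT -> \bar R})
  (muY : {measure set TY -> \bar R}).
Variables (pX : TX -> R) (pG : TX -> TG -> R) (pT pT' : TX -> TT -> R)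
  (pZ : TG -> TX -> TZ -> R) (pY pY' : TZ -> TT -> TY -> R).

Definition joint (g : TG) (x : TX) (z : TZ) (t t' : TT) (y y' : TY) : R :=
  (pX x * pG x g * pT x t * pT' x t' * pZ g x z * pY z t y * pY' z t' y')%R.

Definition m_YpYGXTTp y' y g x t t' :=
  \int[muZ]_z (joint g x z t t' y y')%:E.
Definition m_YGXTTp y g x t t' :=
  \int[muZ]_z \int[muY]_y' (joint g x z t t' y y')%:E.
Definition m_YGXT y g x t :=
  \int[muZ]_z \int[muT]_t' \int[muY]_y' (joint g x z t t' y y')%:E.
Definition m_GXT g x t :=
  \int[muY]_y \int[muZ]_z \int[muT]_t' \int[muY]_y' (joint g x z t t' y y')%:E.
Definition m_ZYGXT z y g x t :=
  \int[muT]_t' \int[muY]_y' (joint g x z t t' y y')%:E.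
Definition m_YZT y z t :=
  \int[muG]_g \int[muX]_x \int[muT]_t' \int[muY]_y' (joint g x z t t' y y')%:E.
Definition m_ZT z t :=
  \int[muY]_y \int[muG]_g \int[muX]_x \int[muT]_t' \int[muY]_y'
    (joint g x z t t' y y')%:E.
Definition m_YpGXTp y' g x t' :=
  \int[muZ]_z \int[muT]_t \int[muY]_y (joint g x z t t' y y')%:E.
Definition m_GXTp g x t' :=
  \int[muY]_y' \int[muZ]_z \int[muT]_t \int[muY]_y (joint g x z t t' y y')%:E.
Definition m_ZYpGXTp z y' g x t' :=
  \int[muT]_t \int[muY]_y (joint g x z t t' y y')%:E.

Definition cond (num den : \bar R) : R := (fine num / fine den)%R.

Definition p_Yp_given_YGXTTp y' y g x t t' : R :=
  cond (m_YpYGXTTp y' y g x t t') (m_YGXTTp y g x t t').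
Definition p_Y_given_GXT y g x t : R := cond (m_YGXT y g x t) (m_GXT g x t).
Definition p_Z_given_YGXT z y g x t : R := cond (m_ZYGXT z y g x t) (m_YGXT y g x t).
Definition p_Y_given_ZT y z t : R := cond (m_YZT y z t) (m_ZT z t).
Definition p_Yp_given_GXTp y' g x t' : R := cond (m_YpGXTp y' g x t') (m_GXTp g x t').
Definition p_Z_given_YpGXTp z y' g x t' : R :=
  cond (m_ZYpGXTp z y' g x t') (m_YpGXTp y' g x t').

Definition Jobj y' y g x t t' : R :=
  (ln (p_Yp_given_YGXTTp y' y g x t t') + ln (p_Y_given_GXT y g x t))%R.

End Model.

Definition expect {R : realType} {d} {T : measurableType d}
  (mu : {measure set T -> \bar R}) (f h : T -> R) : \bar R :=
  \int[mu]_z (f z * h z)%:E.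

Definition KL {R : realType} {d} {T : measurableType d}
  (mu : {measure set T -> \bar R}) (f g : T -> R) : \bar R :=
  \int[mu]_z (f z * ln (f z / g z))%:E.

From Pilot Require Import Defs.
From HB Require Import structures.
From mathcomp Require Import all_boot all_order all_algebra.
From mathcomp Require Import all_classical all_reals all_analysis.
From mathcomp Require Import measurable_realfun ring lra.
Import Order.TTheory GRing.Theory Num.Theory.
Local Open Scope ring_scope.
Local Open Scope ereal_scope.

(* Under the factorisation every conditional density of the statement has a
   closed form.  With C = p(y|g,x,t) = \int p(z|g,x) p(y|z,t) dz,
   D = p(y'|g,x,t') and E = \int p(z|g,x) p(y|z,t) p(y'|z,t') dz one finds
   p(Y'|Y,G,X,T,T') = E / C, p(Y|Z,T) = p(y|z,t) and posteriors
   q(z) = p(z|g,x) p(y|z,t) / C, q'(z) = p(z|g,x) p(y'|z,t') / D, so J = ln E.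
   The log-ratio in the KL term cancels the expected log-likelihood, and the
   right-hand side collapses to ln C + E_q[ln p(y'|z,t')].  Jensen's inequality
   for ln, obtained by integrating its tangent at E / C against q, bounds the
   expectation by ln E_q[p(y'|z,t')] = ln (E / C). *)

Lemma fine_EFinMl {R : realType} (k : R) (a : \bar R) :
  fine (k%:E * a) = (k * fine a)%R.
Proof.
case: a => [a| |] /=; rewrite ?mulr0 //.
- by rewrite mulry; case: sgrP => _; rewrite ?mul0e ?mul1e ?mulN1e.
- by rewrite mulrNy; case: sgrP => _; rewrite ?mul0e ?mul1e ?mulN1e.
Qed.

Lemma condMl {R : realType} (k : R) (a b : \bar R) :
  k != 0%R -> cond (k%:E * a) (k%:E * b) = cond a b.
Proof. by move=> k0; rewrite /cond !fine_EFinMl -mulf_div divff ?mul1r. Qed.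

Lemma pmule_lty {R : realType} (k : R) (a : \bar R) :
  (0 < k)%R -> k%:E * a < +oo -> a < +oo.
Proof. by move=> k0; case: a => [r _||//]; rewrite ?ltry // mulry gtr0_sg // mul1e. Qed.

Lemma ln_le_tangent {R : realType} (M u : R) :
  (0 < M)%R -> (0 < u)%R -> (ln u <= ln M + u / M - 1)%R.
Proof.
move=> M0 u0; have uM0 : (0 < u / M)%R by rewrite divr_gt0.
have uM1 : (-1 < u / M - 1)%R by lra.
by have := le_ln1Dx uM1; rewrite (addrC 1%R) subrK ln_div ?posrE //; lra.
Qed.

Section integral_density.
Context {d} {T : measurableType d} {R : realType} (mu : {measure set T -> \bar R}).

Lemma ge0_integral_EFinZl (k : R) (f : T -> R) : (0 <= k)%R ->
  measurable_fun setT f -> (forall z, 0 <= f z)%R ->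
  \int[mu]_z (k * f z)%:E = k%:E * \int[mu]_z (f z)%:E.
Proof.
move=> k0 mf f0; under eq_integral do rewrite EFinM.
by rewrite ge0_integralZl_EFin //; [move=> z _; rewrite lee_fin | exact/measurable_EFinP].
Qed.

Lemma integralZl_density (k : R) (f : T -> R) : (0 <= k)%R ->
  measurable_fun setT f -> (forall z, 0 <= f z)%R -> \int[mu]_z (f z)%:E = 1 ->
  \int[mu]_z (k * f z)%:E = k%:E.
Proof. by move=> k0 mf f0 f1; rewrite ge0_integral_EFinZl // f1 mule1. Qed.

Lemma ge0_integrable_lty (f : T -> R) : measurable_fun setT f ->
  (forall z, 0 <= f z)%R -> \int[mu]_z (f z)%:E < +oo ->
  mu.-integrable setT (fun z => (f z)%:E).
Proof.
move=> mf f0 flty; apply/integrableP; split; first exact/measurable_EFinP.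
by under eq_integral do rewrite gee0_abs ?lee_fin //.
Qed.

Lemma density_measureT_neq0 (h : T -> R) : measurable_fun setT h ->
  \int[mu]_z (h z)%:E = 1 -> mu setT != 0.
Proof.
move=> mh h1; apply/eqP => mu0; move: h1.
rewrite null_set_integral //; last exact/measurable_EFinP.
by case=> /eqP; rewrite eq_sym oner_eq0.
Qed.

Lemma integral_gt0 (f : T -> \bar R) : mu setT != 0 ->
  measurable_fun setT f -> (forall z, 0 < f z) -> 0 < \int[mu]_z f z.
Proof.
move=> mu0 mf f0; rewrite lt0e integral_ge0 ?andbT; last by move=> z _; exact: ltW.
apply: contra mu0 => /eqP if0.
have [N [mN N0 fN]] : ae_eq mu setT f (cst 0).
  apply/ae_eq_integral_abs => //; rewrite -if0; apply: eq_integral => z _.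
  by rewrite gee0_abs // ltW.
apply/eqP; apply: (subset_measure0 _ _ _ N0) => // z _; apply: fN => /(_ I) fz.
by move: (f0 z); rewrite fz ltxx.
Qed.

Lemma integral_fine_gt0 (f : T -> R) : mu setT != 0 -> measurable_fun setT f ->
  (forall z, 0 < f z)%R -> \int[mu]_z (f z)%:E < +oo ->
  (0 < fine (\int[mu]_z (f z)%:E))%R.
Proof.
move=> mu0 mf f0 flty; rewrite fine_gt0 // flty andbT integral_gt0 //.
exact/measurable_EFinP.
Qed.

Lemma integral_ln_le_ln_integral (q h : T -> R) (M : R) :
  measurable_fun setT q -> measurable_fun setT h ->
  (forall z, 0 <= q z)%R -> (forall z, 0 < h z)%R ->
  \int[mu]_z (q z)%:E = 1 -> \int[mu]_z (q z * h z)%:E = M%:E -> (0 < M)%R ->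
  mu.-integrable setT (fun z => (q z * ln (h z))%:E) ->
  \int[mu]_z (q z * ln (h z))%:E <= (ln M)%:E.
Proof.
move=> mq mh q0 h0 q1 qhM M0 iqlnh.
have iq : mu.-integrable setT (fun z => (q z)%:E).
  by apply: ge0_integrable_lty => //; rewrite q1 ltry.
have iqh : mu.-integrable setT (fun z => (q z * h z)%:E).
  apply: ge0_integrable_lty; first exact: measurable_funM.
    by move=> z; rewrite mulr_ge0 // ltW.
  by rewrite qhM ltry.
pose a := (ln M - 1)%R.
have iaq := integrableZl measurableT a iq.
have iqhM := integrableZl measurableT M^-1 iqh.
have itangent := integrableD measurableT iaq iqhM.
apply: le_trans (le_integral measurableT iqlnh itangent _) _.
  move=> z _; rewrite /= -!EFinM -EFinD lee_fin.
  have -> : (a * q z + M^-1 * (q z * h z) = q z * (ln M + h z / M - 1))%R.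
    by rewrite /a; field; rewrite gt_eqF.
  by rewrite ler_wpM2l // ln_le_tangent.
rewrite (integralD measurableT iaq iqhM) (integralZl measurableT iq).
rewrite (integralZl measurableT iqh) q1 qhM -!EFinM -EFinD lee_fin.
by rewrite /a mulr1 mulVf ?gt_eqF // subrK.
Qed.

End integral_density.

Section evidence_lower_bound.
Context {d} {T : measurableType d} {R : realType} (mu : {measure set T -> \bar R}).
Variables prior lik lik' : T -> R.
Hypotheses (mprior : measurable_fun setT prior) (mlik : measurable_fun setT lik)
  (mlik' : measurable_fun setT lik').
Hypotheses (prior_gt0 : forall z, (0 < prior z)%R) (lik_gt0 : forall z, (0 < lik z)%R)
  (lik'_gt0 : forall z, (0 < lik' z)%R).
Hypothesis prior1 : \int[mu]_z (prior z)%:E = 1.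
Hypotheses (C_lty : \int[mu]_z (prior z * lik z)%:E < +oo)
  (D_lty : \int[mu]_z (prior z * lik' z)%:E < +oo)
  (E_lty : \int[mu]_z (prior z * lik z * lik' z)%:E < +oo).

(* In the application [prior] is p(Z|G,X) and [lik], [lik'] are p(Y|Z,T) and
   p(Y'|Z,T'); then [C], [D], [E] are p(Y|G,X,T), p(Y'|G,X,T') and
   p(Y,Y'|G,X,T,T'), and [post], [post'] are the two posteriors of Z. *)
Let C := fine (\int[mu]_z (prior z * lik z)%:E).
Let D := fine (\int[mu]_z (prior z * lik' z)%:E).
Let E := fine (\int[mu]_z (prior z * lik z * lik' z)%:E).
Let post z := (prior z * lik z / C)%R.
Let post' z := (prior z * lik' z / D)%R.

Let mu0 : mu setT != 0.
Proof. exact: density_measureT_neq0 _ _ mprior prior1. Qed.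

Let mpriorlik : measurable_fun setT (fun z => prior z * lik z)%R.
Proof. exact: measurable_funM. Qed.

Let mpriorlik' : measurable_fun setT (fun z => prior z * lik' z)%R.
Proof. exact: measurable_funM. Qed.

Let mpriorlikk' : measurable_fun setT (fun z => prior z * lik z * lik' z)%R.
Proof. exact: measurable_funM. Qed.

Let C_gt0 : (0 < C)%R.
Proof. by apply: integral_fine_gt0 => // z; rewrite mulr_gt0. Qed.

Let D_gt0 : (0 < D)%R.
Proof. by apply: integral_fine_gt0 => // z; rewrite mulr_gt0. Qed.

Let E_gt0 : (0 < E)%R.
Proof. by apply: integral_fine_gt0 => // z; rewrite !mulr_gt0. Qed.

Let CE : \int[mu]_z (prior z * lik z)%:E = C%:E.
Proof.
by rewrite fineK // ge0_fin_numE // integral_ge0 // => z _; rewrite lee_fin mulr_ge0 ?ltW.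
Qed.

Let EE : \int[mu]_z (prior z * lik z * lik' z)%:E = E%:E.
Proof.
by rewrite fineK // ge0_fin_numE // integral_ge0 // => z _; rewrite lee_fin !mulr_ge0 ?ltW.
Qed.

Let mpost : measurable_fun setT post.
Proof. exact: measurable_funM. Qed.

Let post_ge0 z : (0 <= post z)%R.
Proof. by rewrite divr_ge0 ?mulr_ge0 ?ltW. Qed.

Let post1 : \int[mu]_z (post z)%:E = 1.
Proof.
under eq_integral do rewrite /post mulrC.
rewrite ge0_integral_EFinZl ?invr_ge0 ?ltW //; last by move=> z; rewrite mulr_ge0 ?ltW.
by rewrite CE -EFinM mulVf ?gt_eqF.
Qed.

Let post_lik' : \int[mu]_z (post z * lik' z)%:E = (E / C)%:E.
Proof.
transitivity (\int[mu]_z (C^-1 * (prior z * lik z * lik' z))%:E).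
  by apply: eq_integral => z _; rewrite /post mulrAC mulrC.
rewrite ge0_integral_EFinZl ?invr_ge0 ?ltW //; last by move=> z; rewrite !mulr_ge0 ?ltW.
by rewrite EE -EFinM mulrC.
Qed.

Let elbo_integrandE z : (post z * ln (lik z) - post z * ln (post z / post' z) =
  post z * ln (lik' z) + (ln C - ln D) * post z)%R.
Proof.
have -> : (post z / post' z = lik z * D / (C * lik' z))%R.
  by rewrite /post /post'; field; rewrite !gt_eqF.
rewrite ln_div ?posrE ?mulr_gt0 // !lnM ?posrE //.
by ring.
Qed.

Lemma elbo_le :
  mu.-integrable setT (fun z => (post z * ln (lik z))%:E) ->
  mu.-integrable setT (fun z => (post z * ln (post z / post' z))%:E) ->
  expect mu post (fun z => ln (lik z)) + (ln D)%:E - KL mu post post' <=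
  (ln (E / C) + ln C)%:E.
Proof.
move=> i1 i2.
have ipost : mu.-integrable setT (fun z => (post z)%:E).
  by apply: ge0_integrable_lty; rewrite ?post1 ?ltry.
have ipost_const := integrableZl measurableT (ln C - ln D) ipost.
have ipost_lnlik' : mu.-integrable setT (fun z => (post z * ln (lik' z))%:E).
  apply: eq_integrable
    (integrableB measurableT (integrableB measurableT i1 i2) ipost_const) => // z _.
  by rewrite /= -!EFinD elbo_integrandE addrK.
have jensen := integral_ln_le_ln_integral mu _ _ _ mpost mlik' post_ge0 lik'_gt0
  post1 post_lik' (divr_gt0 E_gt0 C_gt0) ipost_lnlik'.
rewrite /expect /KL addeAC -(integralB_EFin measurableT i1 i2).
under eq_integral do rewrite -EFinB elbo_integrandE EFinD EFinM.
rewrite (integralD measurableT ipost_lnlik' ipost_const).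
rewrite (integralZl measurableT ipost) post1 mule1.
apply: le_trans (leeD (leeD jensen (lexx _)) (lexx _)) _.
by rewrite -!EFinD lee_fin; lra.
Qed.

End evidence_lower_bound.

Section fubini_density.
Context {d1 d2} {T1 : measurableType d1} {T2 : measurableType d2} {R : realType}
  (mu1 : {sigma_finite_measure set T1 -> \bar R})
  (mu2 : {sigma_finite_measure set T2 -> \bar R}).

Lemma integral_kernel_density (f : T1 -> R) (k : T1 -> T2 -> R) :
  measurable_fun setT f -> measurable_fun setT (fun ab : T1 * T2 => k ab.1 ab.2) ->
  (forall a, 0 <= f a)%R -> (forall a b, 0 <= k a b)%R ->
  (forall a, \int[mu2]_b (k a b)%:E = 1) ->
  \int[mu2]_b \int[mu1]_a (f a * k a b)%:E = \int[mu1]_a (f a)%:E.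
Proof.
move=> mf mk f0 k0 k1.
have mfk : measurable_fun setT (fun ab : T1 * T2 => (f ab.1 * k ab.1 ab.2)%:E).
  by apply/measurable_EFinP/measurable_funM => //; exact: measurableT_comp.
rewrite -(fubini_tonelli _ mfk) /=; last by move=> ab; rewrite lee_fin mulr_ge0.
apply: eq_integral => a _; apply: integralZl_density => //.
exact: measurable_fun_pair2 mk.
Qed.

Lemma ge0_integral2_EFinZr (F : T1 * T2 -> R) (c : R) :
  measurable_fun setT F -> (forall ab, 0 <= F ab)%R -> (0 <= c)%R ->
  \int[mu1]_a \int[mu2]_b (F (a, b) * c)%:E =
  \int[mu1]_a \int[mu2]_b (F (a, b))%:E * c%:E.
Proof.
move=> mF F0 c0.
have mFE : measurable_fun setT (fun ab => (F ab)%:E) by exact/measurable_EFinP.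
transitivity (\int[mu1]_a (\int[mu2]_b (F (a, b))%:E * c%:E)).
  apply: eq_integral => a _; under eq_integral do rewrite EFinM.
  rewrite ge0_integralZr ?lee_fin //; first exact: measurable_fun_pair2 mFE.
  by move=> b _; rewrite lee_fin.
rewrite ge0_integralZr ?lee_fin //.
- exact: measurable_fun_fubini_tonelli_F mFE _.
- by move=> a _; apply: integral_ge0 => b _; rewrite lee_fin.
Qed.

End fubini_density.

(* p(G, X, Z, T, Y) for the network with a single treatment-outcome pair: what
   remains of [joint] once (T', Y') or (T, Y) is integrated out. *)
Definition arm_joint {R : realType} {TG TX TZ TT TY : Type} (pX : TX -> R)
    (pG : TX -> TG -> R) (pT : TX -> TT -> R) (pZ : TG -> TX -> TZ -> R)
    (pY : TZ -> TT -> TY -> R) g x z t y : R :=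
  (pX x * pG x g * pT x t * pZ g x z * pY z t y)%R.

Section treatment_arm.
Context {R : realType} {dG dX dZ dT dY : measure_display}
  {TG : measurableType dG} {TX : measurableType dX} {TZ : measurableType dZ}
  {TT : measurableType dT} {TY : measurableType dY}.
Variables (muG : {sigma_finite_measure set TG -> \bar R})
  (muX : {sigma_finite_measure set TX -> \bar R})
  (muZ : {sigma_finite_measure set TZ -> \bar R})
  (muY : {sigma_finite_measure set TY -> \bar R}).
Variables (pX : TX -> R) (pG : TX -> TG -> R) (pT : TX -> TT -> R)
  (pZ : TG -> TX -> TZ -> R) (pY : TZ -> TT -> TY -> R).
Hypotheses (mpX : measurable_fun setT pX)
  (mpG : measurable_fun setT (fun q : TX * TG => pG q.1 q.2))
  (mpT : measurable_fun setT (fun q : TX * TT => pT q.1 q.2))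
  (mpZ : measurable_fun setT (fun q : TG * TX * TZ => pZ q.1.1 q.1.2 q.2))
  (mpY : measurable_fun setT (fun q : TZ * TT * TY => pY q.1.1 q.1.2 q.2)).
Hypotheses (pX_pos : forall x, (0 < pX x)%R)
  (pG_pos : forall x g, (0 < pG x g)%R)
  (pT_pos : forall x t, (0 < pT x t)%R)
  (pZ_pos : forall g x z, (0 < pZ g x z)%R)
  (pY_pos : forall z t y, (0 < pY z t y)%R).
Hypotheses (pX_norm : \int[muX]_x (pX x)%:E = 1)
  (pG_norm : forall x, \int[muG]_g (pG x g)%:E = 1)
  (pZ_norm : forall g x, \int[muZ]_z (pZ g x z)%:E = 1)
  (pY_norm : forall z t, \int[muY]_y (pY z t y)%:E = 1).

Local Notation ajoint := (arm_joint pX pG pT pZ pY).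

Let mpZ_z g x : measurable_fun setT (pZ g x).
Proof. exact: measurable_fun_pair2 (g, x) mpZ. Qed.

Let mpY_z t y : measurable_fun setT (fun z => pY z t y).
Proof. exact: measurable_fun_pair1 t (measurable_fun_pair1 y mpY). Qed.

Lemma arm_joint_integral_Z g x t y :
  \int[muZ]_z (ajoint g x z t y)%:E =
  (pX x * pG x g * pT x t)%:E * \int[muZ]_z (pZ g x z * pY z t y)%:E.
Proof.
under eq_integral do rewrite /arm_joint -mulrA.
rewrite ge0_integral_EFinZl ?mulr_ge0 ?ltW //; first exact: measurable_funM.
by move=> z; rewrite mulr_ge0 ?ltW.
Qed.

Lemma arm_joint_integral_YZ g x t :
  \int[muY]_y \int[muZ]_z (ajoint g x z t y)%:E = (pX x * pG x g * pT x t)%:E.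
Proof.
rewrite integral_kernel_density //.
- by rewrite integralZl_density ?mulr_ge0 ?ltW // => z; rewrite ltW.
- exact: measurable_funM.
- exact: measurableT_comp mpY (measurable_fun_pair
    (measurable_fun_pair measurable_fst (measurable_cst _)) measurable_snd).
- by move=> z; rewrite !mulr_ge0 ?ltW.
- by move=> z y; exact: ltW.
Qed.

Lemma cond_arm_evidence g x t y :
  cond (\int[muZ]_z (ajoint g x z t y)%:E)
       (\int[muY]_y' \int[muZ]_z (ajoint g x z t y')%:E) =
  fine (\int[muZ]_z (pZ g x z * pY z t y)%:E).
Proof.
rewrite arm_joint_integral_Z arm_joint_integral_YZ -[X in cond _ X]mule1.
by rewrite condMl ?gt_eqF ?mulr_gt0 // /cond divr1.
Qed.

Lemma cond_arm_posterior g x z t y :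
  cond (ajoint g x z t y)%:E (\int[muZ]_z' (ajoint g x z' t y)%:E) =
  (pZ g x z * pY z t y / fine (\int[muZ]_z' (pZ g x z' * pY z' t y)%:E))%R.
Proof.
by rewrite arm_joint_integral_Z /arm_joint -mulrA EFinM condMl ?gt_eqF ?mulr_gt0.
Qed.

Let joint_GXZT z t (q : TG * TX) := (pX q.2 * pG q.2 q.1 * pT q.2 t * pZ q.1 q.2 z)%R.

Let mjoint_GXZT z t : measurable_fun setT (joint_GXZT z t).
Proof.
apply: measurable_funM; [apply: measurable_funM; [apply: measurable_funM|]|].
- exact: measurableT_comp mpX measurable_snd.
- exact: measurableT_comp mpG (measurable_fun_pair measurable_snd measurable_fst).
- exact: measurableT_comp mpT (measurable_fun_pair measurable_snd (measurable_cst t)).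
- exact: (measurableT_comp mpZ
    (measurable_fun_pair (@measurable_id _ _ setT) (measurable_cst z))).
Qed.

Let joint_GXZT_gt0 z t q : (0 < joint_GXZT z t q)%R.
Proof. by rewrite !mulr_gt0. Qed.

Let marg_ZT z t := \int[muG]_g \int[muX]_x (joint_GXZT z t (g, x))%:E.

Lemma arm_joint_integral_GX z t y :
  \int[muG]_g \int[muX]_x (ajoint g x z t y)%:E = marg_ZT z t * (pY z t y)%:E.
Proof.
apply: ge0_integral2_EFinZr => // [q|]; exact: ltW.
Qed.

Let marg_ZT_gt0 z t : 0 < marg_ZT z t.
Proof.
have muX0 := density_measureT_neq0 _ _ mpX pX_norm.
have [x0 _] : ([set: TX] !=set0)%classic.
  by apply/set0P; apply: contra muX0 => /eqP ->; rewrite measure0.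
have muG0 := density_measureT_neq0 _ _ (measurable_fun_pair2 x0 mpG) (pG_norm x0).
have mjointE : measurable_fun setT (fun q => (joint_GXZT z t q)%:E).
  exact/measurable_EFinP.
apply: integral_gt0 muG0 _ _ => [|g].
  by apply: measurable_fun_fubini_tonelli_F mjointE _ => q; rewrite lee_fin ltW.
apply: integral_gt0 muX0 _ _ => [|x]; last by rewrite lte_fin.
exact: measurable_fun_pair2 g mjointE.
Qed.

Lemma cond_arm_likelihood z t y0 :
  \int[muY]_y \int[muG]_g \int[muX]_x (ajoint g x z t y)%:E < +oo ->
  cond (\int[muG]_g \int[muX]_x (ajoint g x z t y0)%:E)
       (\int[muY]_y \int[muG]_g \int[muX]_x (ajoint g x z t y)%:E) = pY z t y0.
Proof.
under eq_integral do rewrite arm_joint_integral_GX.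
rewrite arm_joint_integral_GX ge0_integralZl //; last 3 first.
- exact/measurable_EFinP/(measurable_fun_pair2 (z, t) mpY).
- by move=> y _; rewrite lee_fin ltW.
- exact: ltW.
rewrite pY_norm mule1 => K_lty; have K_gt0 := marg_ZT_gt0 z t.
rewrite -(fineK (x := marg_ZT z t)) ?ge0_fin_numE ?ltW // -EFinM /cond /=.
by rewrite mulrAC divff ?mul1r // gt_eqF // fine_gt0 // K_gt0.
Qed.

End treatment_arm.

Section counterfactual_model.
Context {R : realType} {dG dX dZ dT dY : measure_display}
  {TG : measurableType dG} {TX : measurableType dX} {TZ : measurableType dZ}
  {TT : measurableType dT} {TY : measurableType dY}.
Variables (muG : {sigma_finite_measure set TG -> \bar R})
  (muX : {sigma_finite_measure set TX -> \bar R})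
  (muZ : {sigma_finite_measure set TZ -> \bar R})
  (muT : {sigma_finite_measure set TT -> \bar R})
  (muY : {sigma_finite_measure set TY -> \bar R}).
Variables (pX : TX -> R) (pG : TX -> TG -> R) (pT pT' : TX -> TT -> R)
  (pZ : TG -> TX -> TZ -> R) (pY pY' : TZ -> TT -> TY -> R).
Hypotheses (mpX : measurable_fun setT pX)
  (mpG : measurable_fun setT (fun q : TX * TG => pG q.1 q.2))
  (mpT : measurable_fun setT (fun q : TX * TT => pT q.1 q.2))
  (mpT' : measurable_fun setT (fun q : TX * TT => pT' q.1 q.2))
  (mpZ : measurable_fun setT (fun q : TG * TX * TZ => pZ q.1.1 q.1.2 q.2))
  (mpY : measurable_fun setT (fun q : TZ * TT * TY => pY q.1.1 q.1.2 q.2))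
  (mpY' : measurable_fun setT (fun q : TZ * TT * TY => pY' q.1.1 q.1.2 q.2)).
Hypotheses (pX_pos : forall x, (0 < pX x)%R)
  (pG_pos : forall x g, (0 < pG x g)%R)
  (pT_pos : forall x t, (0 < pT x t)%R)
  (pT'_pos : forall x t', (0 < pT' x t')%R)
  (pZ_pos : forall g x z, (0 < pZ g x z)%R)
  (pY_pos : forall z t y, (0 < pY z t y)%R)
  (pY'_pos : forall z t' y', (0 < pY' z t' y')%R).
Hypotheses (pX_norm : \int[muX]_x (pX x)%:E = 1)
  (pG_norm : forall x, \int[muG]_g (pG x g)%:E = 1)
  (pT_norm : forall x, \int[muT]_t (pT x t)%:E = 1)
  (pT'_norm : forall x, \int[muT]_t' (pT' x t')%:E = 1)
  (pZ_norm : forall g x, \int[muZ]_z (pZ g x z)%:E = 1)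
  (pY_norm : forall z t, \int[muY]_y (pY z t y)%:E = 1)
  (pY'_norm : forall z t', \int[muY]_y' (pY' z t' y')%:E = 1).

Local Notation joint := (joint pX pG pT pT' pZ pY pY').

Lemma joint_integral_Y' g x z t t' y :
  \int[muY]_y' (joint g x z t t' y y')%:E =
  (pX x * pG x g * pT x t * pT' x t' * pZ g x z * pY z t y)%:E.
Proof.
apply: integralZl_density => //; first by rewrite !mulr_ge0 ?ltW.
- exact: measurable_fun_pair2 (z, t') mpY'.
- by move=> y'; rewrite ltW.
Qed.

Lemma joint_integral_T'Y' g x z t y :
  \int[muT]_t' \int[muY]_y' (joint g x z t t' y y')%:E =
  (arm_joint pX pG pT pZ pY g x z t y)%:E.
Proof.
transitivity (\int[muT]_t' (arm_joint pX pG pT pZ pY g x z t y * pT' x t')%:E).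
  by apply: eq_integral => t' _; rewrite joint_integral_Y' /arm_joint; congr EFin; ring.
apply: integralZl_density => //; first by rewrite !mulr_ge0 ?ltW.
- exact: measurable_fun_pair2 x mpT'.
- by move=> t'; rewrite ltW.
Qed.

Lemma joint_integral_TY g x z t' y' :
  \int[muT]_t \int[muY]_y (joint g x z t t' y y')%:E =
  (arm_joint pX pG pT' pZ pY' g x z t' y')%:E.
Proof.
pose k t := (arm_joint pX pG pT' pZ pY' g x z t' y' * pT x t)%R.
have k_ge0 t : (0 <= k t)%R by rewrite !mulr_ge0 ?ltW.
transitivity (\int[muT]_t (k t)%:E); last first.
  apply: integralZl_density => //; first by rewrite !mulr_ge0 ?ltW.
  - exact: measurable_fun_pair2 x mpT.
  - by move=> t; rewrite ltW.
apply: eq_integral => t _.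
transitivity (\int[muY]_y (k t * pY z t y)%:E).
  by apply: eq_integral => y _; congr EFin; rewrite /k /arm_joint /Defs.joint; ring.
apply: integralZl_density => //.
- exact: measurable_fun_pair2 (z, t) mpY.
- by move=> y; rewrite ltW.
Qed.

Let mpZY g x t y : measurable_fun setT (fun z => pZ g x z * pY z t y)%R.
Proof.
apply: measurable_funM; first exact: measurable_fun_pair2 (g, x) mpZ.
exact: measurable_fun_pair1 t (measurable_fun_pair1 y mpY).
Qed.

Let mpZYY' g x t t' y y' :
  measurable_fun setT (fun z => pZ g x z * pY z t y * pY' z t' y')%R.
Proof.
apply: measurable_funM (mpZY g x t y) _.
exact: measurable_fun_pair1 t' (measurable_fun_pair1 y' mpY').
Qed.

Lemma m_YpYGXTTpE g x t t' y y' :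
  m_YpYGXTTp muZ pX pG pT pT' pZ pY pY' y' y g x t t' =
  (pX x * pG x g * pT x t * pT' x t')%:E *
  \int[muZ]_z (pZ g x z * pY z t y * pY' z t' y')%:E.
Proof.
rewrite -ge0_integral_EFinZl ?mulr_ge0 ?ltW //; last by move=> z; rewrite !mulr_ge0 ?ltW.
by apply: eq_integral => z _; congr EFin; rewrite /Defs.joint; ring.
Qed.

Lemma m_YGXTTpE g x t t' y :
  m_YGXTTp muZ muY pX pG pT pT' pZ pY pY' y g x t t' =
  (pX x * pG x g * pT x t * pT' x t')%:E * \int[muZ]_z (pZ g x z * pY z t y)%:E.
Proof.
rewrite -ge0_integral_EFinZl ?mulr_ge0 ?ltW //; last by move=> z; rewrite !mulr_ge0 ?ltW.
by apply: eq_integral => z _; rewrite joint_integral_Y'; congr EFin; ring.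
Qed.

Lemma p_Yp_given_YGXTTpE g x t t' y y' :
  p_Yp_given_YGXTTp muZ muY pX pG pT pT' pZ pY pY' y' y g x t t' =
  (fine (\int[muZ]_z (pZ g x z * pY z t y * pY' z t' y')%:E) /
   fine (\int[muZ]_z (pZ g x z * pY z t y)%:E))%R.
Proof.
by rewrite /p_Yp_given_YGXTTp m_YpYGXTTpE m_YGXTTpE condMl // gt_eqF ?mulr_gt0.
Qed.

Lemma p_Y_given_GXTE g x t y :
  p_Y_given_GXT muZ muT muY pX pG pT pT' pZ pY pY' y g x t =
  fine (\int[muZ]_z (pZ g x z * pY z t y)%:E).
Proof.
rewrite /p_Y_given_GXT /m_YGXT /m_GXT.
under eq_integral do rewrite joint_integral_T'Y'.
under [X in cond _ X]eq_integral do under eq_integral do rewrite joint_integral_T'Y'.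
by apply: cond_arm_evidence.
Qed.

Lemma p_Yp_given_GXTpE g x t' y' :
  p_Yp_given_GXTp muZ muT muY pX pG pT pT' pZ pY pY' y' g x t' =
  fine (\int[muZ]_z (pZ g x z * pY' z t' y')%:E).
Proof.
rewrite /p_Yp_given_GXTp /m_YpGXTp /m_GXTp.
under eq_integral do rewrite joint_integral_TY.
under [X in cond _ X]eq_integral do under eq_integral do rewrite joint_integral_TY.
by apply: cond_arm_evidence.
Qed.

Lemma p_Z_given_YGXTE g x z t y :
  p_Z_given_YGXT muZ muT muY pX pG pT pT' pZ pY pY' z y g x t =
  (pZ g x z * pY z t y / fine (\int[muZ]_z' (pZ g x z' * pY z' t y)%:E))%R.
Proof.
rewrite /p_Z_given_YGXT /m_ZYGXT /m_YGXT joint_integral_T'Y'.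
under eq_integral do rewrite joint_integral_T'Y'.
exact: cond_arm_posterior.
Qed.

Lemma p_Z_given_YpGXTpE g x z t' y' :
  p_Z_given_YpGXTp muZ muT muY pX pG pT pT' pZ pY pY' z y' g x t' =
  (pZ g x z * pY' z t' y' / fine (\int[muZ]_z' (pZ g x z' * pY' z' t' y')%:E))%R.
Proof.
rewrite /p_Z_given_YpGXTp /m_ZYpGXTp /m_YpGXTp joint_integral_TY.
under eq_integral do rewrite joint_integral_TY.
exact: cond_arm_posterior.
Qed.

Lemma p_Y_given_ZTE y z t :
  m_ZT muG muX muT muY pX pG pT pT' pZ pY pY' z t < +oo ->
  p_Y_given_ZT muG muX muT muY pX pG pT pT' pZ pY pY' y z t = pY z t y.
Proof.
rewrite /p_Y_given_ZT /m_ZT /m_YZT.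
under eq_integral do under eq_integral do under eq_integral do
  rewrite joint_integral_T'Y'.
under [X in cond X _]eq_integral do under eq_integral do rewrite joint_integral_T'Y'.
by apply: cond_arm_likelihood.
Qed.

Lemma evidence_lty g x t y :
  m_YGXT muZ muT muY pX pG pT pT' pZ pY pY' y g x t < +oo ->
  \int[muZ]_z (pZ g x z * pY z t y)%:E < +oo.
Proof.
rewrite /m_YGXT; under eq_integral do rewrite joint_integral_T'Y'.
by rewrite arm_joint_integral_Z //; apply: pmule_lty; rewrite !mulr_gt0.
Qed.

Lemma evidence'_lty g x t' y' :
  m_YpGXTp muZ muT muY pX pG pT pT' pZ pY pY' y' g x t' < +oo ->
  \int[muZ]_z (pZ g x z * pY' z t' y')%:E < +oo.
Proof.
rewrite /m_YpGXTp; under eq_integral do rewrite joint_integral_TY.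
by rewrite arm_joint_integral_Z //; apply: pmule_lty; rewrite !mulr_gt0.
Qed.

Lemma joint_evidence_lty g x t t' y y' :
  m_YpYGXTTp muZ pX pG pT pT' pZ pY pY' y' y g x t t' < +oo ->
  \int[muZ]_z (pZ g x z * pY z t y * pY' z t' y')%:E < +oo.
Proof. by rewrite m_YpYGXTTpE; apply: pmule_lty; rewrite !mulr_gt0. Qed.

End counterfactual_model.

Theorem theorem1 (R : realType) (dG dX dZ dT dY : measure_display)
  (TG : measurableType dG) (TX : measurableType dX) (TZ : measurableType dZ)
  (TT : measurableType dT) (TY : measurableType dY)
  (muG : {sigma_finite_measure set TG -> \bar R})
  (muX : {sigma_finite_measure set TX -> \bar R})
  (muZ : {sigma_finite_measure set TZ -> \bar R})
  (muT : {sigma_finite_measure set TT -> \bar R})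
  (muY : {sigma_finite_measure set TY -> \bar R})
  (pX : TX -> R) (pG : TX -> TG -> R) (pT pT' : TX -> TT -> R)
  (pZ : TG -> TX -> TZ -> R) (pY pY' : TZ -> TT -> TY -> R)
  (* the factors are (jointly) measurable *)
  (mpX : measurable_fun setT pX)
  (mpG : measurable_fun setT (fun q : TX * TG => pG q.1 q.2))
  (mpT : measurable_fun setT (fun q : TX * TT => pT q.1 q.2))
  (mpT' : measurable_fun setT (fun q : TX * TT => pT' q.1 q.2))
  (mpZ : measurable_fun setT (fun q : TG * TX * TZ => pZ q.1.1 q.1.2 q.2))
  (mpY : measurable_fun setT (fun q : TZ * TT * TY => pY q.1.1 q.1.2 q.2))
  (mpY' : measurable_fun setT (fun q : TZ * TT * TY => pY' q.1.1 q.1.2 q.2))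
  (* the factors are positive *)
  (pX_pos : forall x, (0 < pX x)%R)
  (pG_pos : forall x g, (0 < pG x g)%R)
  (pT_pos : forall x t, (0 < pT x t)%R)
  (pT'_pos : forall x t', (0 < pT' x t')%R)
  (pZ_pos : forall g x z, (0 < pZ g x z)%R)
  (pY_pos : forall z t y, (0 < pY z t y)%R)
  (pY'_pos : forall z t' y', (0 < pY' z t' y')%R)
  (* the factors are (conditional) probability densities *)
  (pX_norm : \int[muX]_x (pX x)%:E = 1)
  (pG_norm : forall x, \int[muG]_g (pG x g)%:E = 1)
  (pT_norm : forall x, \int[muT]_t (pT x t)%:E = 1)
  (pT'_norm : forall x, \int[muT]_t' (pT' x t')%:E = 1)
  (pZ_norm : forall g x, \int[muZ]_z (pZ g x z)%:E = 1)
  (pY_norm : forall z t, \int[muY]_y (pY z t y)%:E = 1)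
  (pY'_norm : forall z t', \int[muY]_y' (pY' z t' y')%:E = 1)
  (* a realisation D = (g, x, t, t', y, y') *)
  (g : TG) (x : TX) (t t' : TT) (y y' : TY)
  (* the conditional densities appearing exist (their marginals are finite) *)
  (fin1 : m_YpYGXTTp muZ pX pG pT pT' pZ pY pY' y' y g x t t' < +oo)
  (fin2 : m_YGXTTp muZ muY pX pG pT pT' pZ pY pY' y g x t t' < +oo)
  (fin3 : m_YGXT muZ muT muY pX pG pT pT' pZ pY pY' y g x t < +oo)
  (fin4 : m_GXT muZ muT muY pX pG pT pT' pZ pY pY' g x t < +oo)
  (fin5 : forall z, m_ZT muG muX muT muY pX pG pT pT' pZ pY pY' z t < +oo)
  (fin6 : m_YpGXTp muZ muT muY pX pG pT pT' pZ pY pY' y' g x t' < +oo)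
  (fin7 : m_GXTp muZ muT muY pX pG pT pT' pZ pY pY' g x t' < +oo)
  (* the expectation and the KL divergence are well defined (finite) *)
  (intE : muZ.-integrable setT (fun z =>
     (p_Z_given_YGXT muZ muT muY pX pG pT pT' pZ pY pY' z y g x t *
      ln (p_Y_given_ZT muG muX muT muY pX pG pT pT' pZ pY pY' y z t))%:E))
  (intKL : muZ.-integrable setT (fun z =>
     (p_Z_given_YGXT muZ muT muY pX pG pT pT' pZ pY pY' z y g x t *
      ln (p_Z_given_YGXT muZ muT muY pX pG pT pT' pZ pY pY' z y g x t /
          p_Z_given_YpGXTp muZ muT muY pX pG pT pT' pZ pY pY' z y' g x t'))%:E)) :
  expect muZ
      (fun z => p_Z_given_YGXT muZ muT muY pX pG pT pT' pZ pY pY' z y g x t)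
      (fun z => ln (p_Y_given_ZT muG muX muT muY pX pG pT pT' pZ pY pY' y z t))
  + (ln (p_Yp_given_GXTp muZ muT muY pX pG pT pT' pZ pY pY' y' g x t'))%:E
  - KL muZ
      (fun z => p_Z_given_YGXT muZ muT muY pX pG pT pT' pZ pY pY' z y g x t)
      (fun z => p_Z_given_YpGXTp muZ muT muY pX pG pT pT' pZ pY pY' z y' g x t')
  <= (Jobj muZ muT muY pX pG pT pT' pZ pY pY' y' y g x t t')%:E.
Proof.
rewrite /Jobj p_Yp_given_YGXTTpE // p_Y_given_GXTE // p_Yp_given_GXTpE // /expect /KL.
under eq_integral do rewrite p_Z_given_YGXTE // p_Y_given_ZTE //.
under [X in _ - X]eq_integral do rewrite p_Z_given_YGXTE // p_Z_given_YpGXTpE //.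
apply: elbo_le => //.
- exact: measurable_fun_pair2 (g, x) mpZ.
- exact: measurable_fun_pair1 t (measurable_fun_pair1 y mpY).
- exact: measurable_fun_pair1 t' (measurable_fun_pair1 y' mpY').
- by move: fin3; apply: evidence_lty.
- by move: fin6; apply: evidence'_lty.
- by move: fin1; apply: joint_evidence_lty.
- apply: eq_integrable intE => // z _.
  by rewrite p_Z_given_YGXTE // p_Y_given_ZTE.
- apply: eq_integrable intKL => // z _.
  by rewrite p_Z_given_YGXTE // p_Z_given_YpGXTpE.
Qed.
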